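(* Let $m\in\mathbb{N}$. Then there is a set $\Gamma(m)\subset(0,1]^{m}$ with the following properties: (i) $\sharp\Gamma(m)\leq 2^{5m/2}$. (ii) For every $\{\varepsilon_{i}\}_{i=1}^{m}\in\Gamma(m)$, the numbers $m\varepsilon_{i}$ are positive integers for all $i\in\{1,\dots,m\}$, $\sum_{i=1}^{m}\varepsilon_{i}\leq 3$, and for all $t>0$, $\sharp\{i\in\{1,\dots,m\}:\varepsilon_{i}\geq t\}\leq 2/t$. (iii) For every sequence $\{\alpha_{i}\}_{i=1}^{m}$ with each $\alpha_{i}\in[0,1]$ and $\sum_{i=1}^{m}\alpha_{i}=1$ there is $\{\varepsilon_{i}\}_{i=1}^{m}\in\Gamma(m)$ such that $\alpha_{i}\leq\varepsilon_{i}$ for all $i\in\{1,\dots,m\}$.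
   Context: $\sharp A$ denotes the cardinality of a finite set $A$. *)

From mathcomp Require Import all_boot all_order all_algebra.
From mathcomp Require Import all_classical all_reals all_analysis.
Set Implicit Arguments. Unset Strict Implicit. Unset Printing Implicit Defensive.

From mathcomp Require Import all_boot all_order all_algebra.
From mathcomp Require Import all_classical all_reals all_analysis.
From mathcomp Require Import zify.
Import Order.TTheory GRing.Theory Num.Theory.

Set Implicit Arguments.
Unset Strict Implicit.
Unset Printing Implicit Defensive.

(** Take for Gamma(m) the vectors ((c_i + 1) / m)_i with c_i in {0, ..., m-1}
    and sum_i c_i <= m.  Rounding each a_i up to the next multiple of 1/m
    (capped at 1) gives such a vector dominating a, since
    sum_i floor(m a_i) <= m.  Each e in Gamma(m) has sum at most 2, which
    bounds #{i | e_i >= t} by 2/t.  Finally, giving each c the weight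
    prod_i 2^(-c_i) >= 2^(-m), the total weight of all c is at most
    (sum_j 2^(-j))^m < 2^m, so there are at most 4^m <= 2^(5m/2) such vectors. *)

Lemma sum_exp2_sub_lt k : (\sum_(j < k) 2 ^ (k - j) < 2 ^ k.+1)%N.
Proof.
elim: k => [|k IHk]; first by rewrite big_ord0.
rewrite big_ord_recl subn0 (expnS 2 k.+1) mul2n -addnn ltn_add2l.
by under eq_bigr => j _ do rewrite lift0 subSS.
Qed.

Lemma card_ffun_sum_le (I : finType) k s :
  (#|[pred c : {ffun I -> 'I_k} | \sum_i (c i : nat) <= s]| <= 2 ^ (#|I| + s))%N.
Proof.
set P := [pred c | _].
have weightP c : c \in P -> (2 ^ (k * #|I|) <= 2 ^ s * \prod_i 2 ^ (k - c i))%N.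
  rewrite inE => Pc; rewrite -expn_sum -expnD leq_exp2l //.
  have -> : (k * #|I| = \sum_i (c i : nat) + \sum_i (k - c i))%N.
    rewrite -big_split /= (eq_bigr (fun=> k)) => [|i _]; last by rewrite subnKC // ltnW.
    by rewrite sum_nat_const mulnC.
  by rewrite leq_add2r.
have : (#|P| * 2 ^ (k * #|I|) <= 2 ^ (#|I| + s) * 2 ^ (k * #|I|))%N.
  rewrite -sum1_card big_distrl /=.
  apply: (@leq_trans (\sum_(c in P) 2 ^ s * \prod_i 2 ^ (k - c i))).
    by apply: leq_sum => c Pc; rewrite mul1n weightP.
  have -> : (2 ^ (#|I| + s) * 2 ^ (k * #|I|) = 2 ^ s * 2 ^ (k.+1 * #|I|))%N.
    by rewrite -!expnD; congr (_ ^ _); lia.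
  rewrite -big_distrr /= leq_pmul2l ?expn_gt0 //.
  apply: (@leq_trans (\sum_(c : {ffun I -> 'I_k}) \prod_i 2 ^ (k - c i))).
    by rewrite [X in (_ <= X)%N](bigID (mem P)) leq_addr.
  rewrite -(bigA_distr_bigA (fun (i : I) (j : 'I_k) => 2 ^ (k - j))) /=.
  rewrite expnM -prod_nat_const; apply: leq_prod => i _.
  exact: ltnW (sum_exp2_sub_lt k).
by rewrite leq_pmul2r ?expn_gt0.
Qed.

Local Open Scope ring_scope.

Lemma card_ge_mulr_le_sum (R : numDomainType) (I : finType) (f : I -> R) (t : R) :
  (forall i, 0 <= f i) -> #|[pred i | t <= f i]|%:R * t <= \sum_i f i.
Proof.
move=> f_ge0; rewrite mulr_natl -sumr_const (bigID [pred i | t <= f i] predT) /=.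
rewrite -[leLHS]addr0 lerD ?sumr_ge0 //.
by apply: ler_sum => i; rewrite inE.
Qed.

Lemma natr_exp2_le_powR (R : realType) (k : nat) (x : R) :
  k%:R <= x -> (2 ^ k)%:R <= (2 : R) `^ x.
Proof. by move=> kx; rewrite natrX -powR_mulrn ?ler0n // ler_powR ?ler1n. Qed.

Section Grid.

Variables (R : realType) (n : nat).
Hypothesis n_gt0 : (0 < n)%N.

Definition sum_le_ffun : pred {ffun 'I_n -> 'I_n} :=
  [pred c : {ffun 'I_n -> 'I_n} | \sum_i (c i : nat) <= n]%N.

Definition grid_point (c : {ffun 'I_n -> 'I_n}) : {ffun 'I_n -> R} :=
  [ffun i => (c i).+1%:R / n%:R].

Let n_neq0 : n%:R != 0 :> R. Proof. by rewrite pnatr_eq0 -lt0n. Qed.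

Lemma mul_grid_point c i : n%:R * grid_point c i = (c i).+1%:R.
Proof. by rewrite ffunE mulrC divfK. Qed.

Lemma grid_point_inj : injective grid_point.
Proof.
move=> c d /ffunP cd; apply/ffunP => i; apply/val_inj/succn_inj.
by apply/eqP; rewrite -(eqr_nat R) -!(mul_grid_point _ i) cd.
Qed.

Lemma grid_point_itv c i : 0 < grid_point c i <= 1.
Proof. by rewrite ffunE divr_gt0 ?ltr0n //= ler_pdivrMr ?ltr0n // mul1r ler_nat. Qed.

Lemma sum_grid_point_le2 c : c \in sum_le_ffun -> \sum_i grid_point c i <= 2.
Proof.
have n_pos : 0 < n%:R :> R by rewrite ltr0n.
rewrite inE => c_le; rewrite -(ler_pM2l n_pos) mulr_sumr.
under eq_bigr => i _ do rewrite mul_grid_point.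
rewrite -natr_sum -natrM ler_nat.
under eq_bigr => i _ do rewrite -addn1.
by rewrite big_split /= sum1_card card_ord muln2 -addnn leq_add2r.
Qed.

Lemma grid_point_cover (a : 'I_n -> R) :
  (forall i, 0 <= a i <= 1) -> \sum_i a i = 1 ->
  exists2 c, c \in sum_le_ffun & forall i, a i <= grid_point c i.
Proof.
move=> a01 sum_a1; have n_pos : 0 < n%:R :> R by rewrite ltr0n.
have na_ge0 i : 0 <= n%:R * a i by rewrite mulr_ge0 ?ler0n //; case/andP: (a01 i).
pose r i := minn (Num.truncn (n%:R * a i)) n.-1.
have r_lt i : (r i < n)%N by rewrite /r; lia.
pose c := [ffun i => Ordinal (r_lt i)].
exists c => [|i].
  rewrite inE -(ler_nat R) natr_sum.
  apply: (@le_trans _ _ (\sum_i n%:R * a i)); last by rewrite -mulr_sumr sum_a1 mulr1.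
  apply: ler_sum => i _; rewrite ffunE /=.
  apply: (@le_trans _ _ (Num.truncn (n%:R * a i))%:R); first by rewrite ler_nat geq_minl.
  by rewrite truncn_le na_ge0.
rewrite -(ler_pM2l n_pos) mul_grid_point ffunE /= /r.
case: leqP => _; first exact/ltW/truncnS_gt.
rewrite prednK // -[leRHS]mulr1 ler_pM2l //.
by case/andP: (a01 i).
Qed.

End Grid.

Theorem lemma2p2 (R : realType) (m : nat) :
  exists Gamma : seq {ffun 'I_m -> R},
    [/\ uniq Gamma,
        (forall e, e \in Gamma -> forall i : 'I_m, 0 < e i <= 1),
        (size Gamma)%:R <= (2 : R) `^ ((5 * m)%:R / 2),
        (forall e, e \in Gamma ->
           [/\ (forall i : 'I_m, exists k : nat, (0 < k)%N /\ m%:R * e i = k%:R),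
               \sum_(i < m) e i <= 3
             & forall t : R, 0 < t -> (#|[pred i : 'I_m | t <= e i]|)%:R <= 2 / t])
      & (forall a : {ffun 'I_m -> R},
           (forall i : 'I_m, 0 <= a i <= 1) -> \sum_(i < m) a i = 1 ->
           exists2 e, e \in Gamma & forall i : 'I_m, a i <= e i)].
Proof.
have [->|m_gt0] := posnP m.
  exists [::]; split => //; first by rewrite powR_ge0.
  by move=> a _; rewrite big_ord0 => /eqP; rewrite eq_sym oner_eq0.
exists (map (@grid_point R m) (enum (@sum_le_ffun m))); split.
- by rewrite map_inj_uniq ?enum_uniq //; exact: grid_point_inj.
- by move=> _ /mapP[c _ ->] i; exact: grid_point_itv.
- rewrite size_map -cardE; apply: (@le_trans _ _ (2 ^ (m + m))%:R).
    by have := card_ffun_sum_le 'I_m m m; rewrite card_ord ler_nat.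
  by apply: natr_exp2_le_powR; rewrite ler_pdivlMr // -natrM ler_nat; lia.
- move=> _ /mapP[c c_in ->]; rewrite mem_enum in c_in.
  have sum_le2 := sum_grid_point_le2 R m_gt0 c_in.
  split=> [i | | t t_gt0].
  + by exists (c i).+1; rewrite mul_grid_point.
  + by apply: le_trans sum_le2 _; rewrite ler_nat.
  + rewrite ler_pdivlMr //; apply: le_trans sum_le2.
    by apply: card_ge_mulr_le_sum => i; case/andP: (grid_point_itv R m_gt0 c i) => /ltW.
- move=> a a01 sum_a1; have [c c_in a_le] := grid_point_cover m_gt0 a01 sum_a1.
  by exists (grid_point R c) => //; apply: map_f; rewrite mem_enum.
Qed.
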